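(* Let $G=G_1\times\cdots\times G_m$ be a group, let $U\subset G$ be finite, and let $U_i$ be the projection of $U$ to the factor $G_i$. Suppose there exist $\alpha,\beta>0$ such that $|U_i^n|\geqslant(\alpha|U_i|)^{\beta n}$ for every $n\in\mathbb{N}$ and every $i\in\{1,\dots,m\}$. Then $|U^n|\geqslant(\alpha^m|U|)^{(\beta/m)n}$ for every $n\in\mathbb{N}$.
   Context: $U^n=\{u_1\cdots u_n:u_i\in U\}$. *)

From HB Require Import structures.
From mathcomp Require Import all_boot all_order all_algebra.
From mathcomp Require Import finmap.
From mathcomp Require Import reals exp.
Set Implicit Arguments. Unset Strict Implicit. Unset Printing Implicit Defensive.

Local Open Scope fset_scope.

Fixpoint fset_pow (T : choiceType) (one : T) (mul : T -> T -> T)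
    (U : {fset T}) (n : nat) : {fset T} :=
  match n with
  | 0 => [fset one]
  | n'.+1 => [fset mul x y | x in fset_pow one mul U n', y in U]
  end.

Definition gpow (G : groupType) (U : {fset G}) (n : nat) : {fset G} :=
  fset_pow (1%g : G) (fun x y => (x * y)%g) U n.

Definition prodG (m : nat) (G : 'I_m -> groupType) : choiceType :=
  {dffun forall i : 'I_m, G i}.

Definition prod_one (m : nat) (G : 'I_m -> groupType) : prodG G :=
  [ffun i => (1%g : G i)].

Definition prod_mul (m : nat) (G : 'I_m -> groupType) (x y : prodG G) : prodG G :=
  [ffun i => (x i * y i)%g].

Definition ppow (m : nat) (G : 'I_m -> groupType) (U : {fset prodG G}) (n : nat)
  : {fset prodG G} := fset_pow (prod_one G) (@prod_mul m G) U n.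

Definition proj (m : nat) (G : 'I_m -> groupType) (U : {fset prodG G}) (i : 'I_m)
  : {fset G i} := [fset (x : prodG G) i | x in U].

From HB Require Import structures.
From mathcomp Require Import all_boot all_order all_algebra.
From mathcomp Require Import finmap.
From mathcomp Require Import reals exp.
Import Order.TTheory GRing.Theory Num.Theory.
Local Open Scope ring_scope.

(* Projection to the i-th factor is a homomorphism, so the projection of U^n is
   U_i^n; hence |U_i^n| <= |U^n| for every i, and |U^n|^m >= prod_i |U_i^n|.
   On the other hand U embeds into U_1 x ... x U_m, so |U| <= prod_i |U_i|, and
   the hypothesis applied factorwise gives
   prod_i |U_i^n| >= (prod_i alpha |U_i|)^(beta n) >= (alpha^m |U|)^(beta n).
   Taking m-th roots yields the claim. *)

Local Open Scope fset_scope.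

Section FsetPowMorphism.

Variables (T T' : choiceType) (one : T) (mul : T -> T -> T).
Variables (one' : T') (mul' : T' -> T' -> T') (f : T -> T').
Hypotheses (f1 : f one = one') (fM : forall x y, f (mul x y) = mul' (f x) (f y)).

Lemma fset_pow_morph (U : {fset T}) n :
  fset_pow one' mul' (f @` U) n = f @` fset_pow one mul U n.
Proof.
elim: n => [|n IH] /=; first by rewrite imfset_fset1 f1.
apply/fsetP => z; rewrite IH; apply/imfset2P/imfsetP.
- case=> _ /imfsetP [x /= xUn ->] [_ /imfsetP [y /= yU ->] ->].
  by exists (mul x y); rewrite ?fM //; apply/imfset2P; exists x => //; exists y.
- case=> _ /imfset2P [x xUn [y yU ->]] ->; rewrite fM.
  by exists (f x); [apply: in_imfset | exists (f y) => //; apply: in_imfset].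
Qed.

End FsetPowMorphism.

Section ProductPowers.

Variables (m : nat) (G : 'I_m -> groupType) (U : {fset prodG G}).

Lemma gpow_proj i n : gpow (proj U i) n = [fset (x : prodG G) i | x in ppow U n].
Proof. by apply: fset_pow_morph => [|x y]; rewrite ffunE. Qed.

Lemma card_gpow_proj_le i n : (#|` gpow (proj U i) n| <= #|` ppow U n|)%N.
Proof. by rewrite gpow_proj leq_imfset_card. Qed.

Lemma card_le_prod_proj : (#|` U| <= \prod_(i < m) #|` proj U i|)%N.
Proof.
have proj_mem (x : U) i : val x i \in proj U i by apply: in_imfset; apply: valP.
pose coords (x : U) : {dffun forall i, proj U i} := [ffun i => [` proj_mem x i]].
have coords_inj : injective coords.
  move=> x y /ffunP eq_xy; apply/val_inj/ffunP => i.
  by have := eq_xy i; rewrite !ffunE => /(congr1 val).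
rewrite cardfE -(card_codom coords_inj); apply: leq_trans (max_card _) _.
rewrite card_dep_ffun foldrE big_map big_enum /=.
by apply: eq_leq; apply: eq_bigr => i _; rewrite cardfE.
Qed.

End ProductPowers.

Local Close Scope fset_scope.

Lemma powR_prod (R : realType) (I : Type) (r : seq I) (a : I -> R) e :
  (forall i, 0 <= a i) -> (\prod_(i <- r) a i) `^ e = \prod_(i <- r) a i `^ e.
Proof.
move=> a_ge0; elim: r => [|j r IH]; first by rewrite !big_nil powR1.
by rewrite !big_cons powRM ?IH //; apply: prodr_ge0.
Qed.

Lemma powR_div_le (R : realType) (m : nat) (x y e : R) :
  (0 < m)%N -> 0 <= y -> x `^ e <= y ^+ m -> x `^ (e / m%:R) <= y.
Proof.
move=> m_gt0 y_ge0 le_xy; rewrite -(ler_pXn2r m_gt0) ?nnegrE ?powR_ge0 //.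
rewrite -powR_mulrn ?powR_ge0 // -powRrM mulfVK // pnatr_eq0 -lt0n //.
Qed.

Theorem corollary2p23 (R : realType) (m : nat) (G : 'I_m -> groupType)
    (U : {fset prodG G}) (alpha beta : R) :
  (0 < m)%N -> 0 < alpha -> 0 < beta ->
  (forall (n : nat) (i : 'I_m),
      (alpha * #|` proj U i|%:R) `^ (beta * n%:R) <= #|` gpow (proj U i) n|%:R) ->
  forall n : nat,
    (alpha ^+ m * #|` U|%:R) `^ ((beta / m%:R) * n%:R) <= #|` ppow U n|%:R.
Proof.
move=> m_gt0 alpha_gt0 beta_gt0 growth n.
have factor_ge0 i : 0 <= alpha * #|` proj U i|%:R by rewrite mulr_ge0 // ltW.
rewrite mulrAC; apply: powR_div_le => //.
apply: (@le_trans _ _ ((\prod_(i < m) (alpha * #|` proj U i|%:R)) `^ (beta * n%:R))).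
  have alpha_pow_ge0 : 0 <= alpha ^+ m by rewrite exprn_ge0 // ltW.
  apply: ge0_ler_powR; rewrite ?nnegrE ?mulr_ge0 ?prodr_ge0 ?(ltW beta_gt0) //.
  rewrite big_split /= prodr_const card_ord; apply: ler_wpM2l => //.
  by rewrite -natr_prod ler_nat card_le_prod_proj.
have -> : #|` ppow U n|%:R ^+ m = \prod_(i < m) #|` ppow U n|%:R :> R.
  by rewrite prodr_const card_ord.
rewrite powR_prod //; apply: ler_prod => i _; rewrite powR_ge0 /=.
by apply: le_trans (growth n i) _; rewrite ler_nat card_gpow_proj_le.
Qed.
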